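(* Let $R$ be a commutative ring with identity such that every super finitely presented $R$-module has finite projective dimension. Then the natural group homomorphism $\theta_R:K_0(R)\to S_0(R)$, $[P]\mapsto[P]$ for finitely generated projective $P$, is an isomorphism.
   Context: An $R$-module $M$ is super finitely presented if there is an exact sequence $\cdots\to P_1\to P_0\to M\to 0$ with every $P_i$ finitely generated projective. For a class $\mathcal{C}$ of $R$-modules, its Grothendieck group is the free abelian group on isomorphism classes $(M)$, $M\in\mathcal{C}$, modulo the subgroup generated by $(M)-(M_1)-(M_2)$ for every exact sequence $0\to M_1\to M\to M_2\to 0$ in $\mathcal{C}$; $[M]$ denotes the image of $(M)$. $K_0(R)$ is the Grothendieck group of the class of finitely generated projective $R$-modules, and $S_0(R)$ is the Grothendieck group of the class of super finitely presented $R$-modules. Since finitely generated projective modules are super finitely presented, inclusion induces $\theta_R$. *)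

From HB Require Import structures.
From mathcomp Require Import all_boot all_order all_algebra.
From Stdlib Require Import ClassicalDescription.
Set Implicit Arguments. Unset Strict Implicit. Unset Printing Implicit Defensive.
Import GRing.Theory.
Local Open Scope ring_scope.

(* Modules over a commutative ring R (with identity; the zero ring allowed)
   are MathComp left modules  lmodType R ; R-linear maps are {linear M -> N}. *)
Section Modules.
Variable R : comPzRingType.

Definition surj (M N : lmodType R) (g : M -> N) : Prop :=
  forall y : N, exists x : M, g x = y.

Definition exact_at (A B C : lmodType R) (f : A -> B) (g : B -> C) : Prop :=
  forall y : B, g y = 0 <-> exists x : A, f x = y.

Definition fin_gen (M : lmodType R) : Prop :=
  exists (n : nat) (v : 'I_n -> M),
    forall m : M, exists c : 'I_n -> R, m = \sum_(i < n) c i *: v i.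

Definition projective (P : lmodType R) : Prop :=
  forall (M N : lmodType R) (g : {linear M -> N}) (f : {linear P -> N}),
    surj g -> exists h : {linear P -> M}, forall p : P, g (h p) = f p.

Definition fg_projective (P : lmodType R) : Prop := fin_gen P /\ projective P.

(* an exact sequence  ... -> P 2 --d 1--> P 1 --d 0--> P 0 --e--> M -> 0
   with every P i satisfying Q i *)
Definition resolution (Q : nat -> lmodType R -> Prop) (M : lmodType R) : Prop :=
  exists (P : nat -> lmodType R) (d : forall i, {linear P i.+1 -> P i})
         (e : {linear P 0%N -> M}),
    [/\ forall i, Q i (P i), surj e, exact_at (d 0%N) e
      & forall i, exact_at (d i.+1) (d i)].

Definition super_fin_pres (M : lmodType R) : Prop :=
  resolution (fun _ => fg_projective) M.

Definition trivial_mod (M : lmodType R) : Prop := forall x : M, x = 0.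

Definition pd_le (n : nat) (M : lmodType R) : Prop :=
  resolution (fun i P => projective P /\ ((n < i)%N -> trivial_mod P)) M.

Definition finite_pd (M : lmodType R) : Prop := exists n, pd_le n M.

Definition mod_iso (M N : lmodType R) : Prop :=
  exists f : {linear M -> N}, bijective f.

Definition short_exact (M1 M M2 : lmodType R) : Prop :=
  exists (f : {linear M1 -> M}) (g : {linear M -> M2}),
    [/\ injective f, surj g & exact_at f g].

(* ---- Grothendieck groups ----
   The free abelian group on the modules of a class C, modulo (M)-(N) for
   M ~= N (this realizes the free abelian group on isomorphism classes),
   modulo (M)-(M1)-(M2) for short exact sequences in C. *)
Definition fsum := seq (int * lmodType R).

Definition coef (s : fsum) (M : lmodType R) : int :=
  \sum_(p <- s) (if excluded_middle_informative (p.2 = M) then p.1 else 0).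

(* two formal sums are equal in the free abelian group iff all coefficients agree *)
Definition free_eq (s t : fsum) : Prop := forall M, coef s M = coef t M.

Definition fscale (n : int) (s : fsum) : fsum := map (fun p => (n * p.1, p.2)) s.

Definition supported (C : lmodType R -> Prop) (s : fsum) : Prop :=
  List.Forall (fun p => C p.2) s.

Definition groth_gen (C : lmodType R -> Prop) (g : fsum) : Prop :=
  (exists M N, [/\ C M, C N, mod_iso M N & g = [:: (1, M); (-1, N)]])
  \/ (exists M1 M M2, [/\ C M1, C M, C M2, short_exact M1 M M2
                        & g = [:: (1, M); (-1, M1); (-1, M2)]]).

(* s lies in the subgroup generated by the relations *)
Definition groth_rel (C : lmodType R -> Prop) (s : fsum) : Prop :=
  exists gs : seq (int * fsum),
    List.Forall (fun q => groth_gen C q.2) gs /\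
    free_eq s (flatten (map (fun q => fscale q.1 q.2) gs)).

Definition groth_eq (C : lmodType R -> Prop) (s t : fsum) : Prop :=
  groth_rel C (s ++ fscale (-1) t).

(* For C ⊆ D, the map  G(C) -> G(D),  [s] |-> [s]  is a well-defined
   isomorphism (it is additive by construction). *)
Definition groth_incl_iso (C D : lmodType R -> Prop) : Prop :=
  [/\ forall s t, supported C s -> supported C t -> groth_eq C s t -> groth_eq D s t,
      forall s t, supported C s -> supported C t -> groth_eq D s t -> groth_eq C s t
    & forall s, supported D s -> exists t, supported C t /\ groth_eq D s t].

Definition theta_is_iso : Prop := groth_incl_iso fg_projective super_fin_pres.

End Modules.

(* A super finitely presented module M has a resolution by finitely generated
   projectives and, by hypothesis, a projective resolution of some finite length n.
   The generalized Schanuel lemma makes the n-th syzygies of the two resolutions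
   stably isomorphic; the second one is 0, so the first is a direct summand of a
   projective, i.e. finitely generated projective.  Hence M has a finite resolution
   0 -> P_n -> ... -> P_0 -> M -> 0 by finitely generated projectives, and
   chi(M) = sum_i (-1)^i [P_i] in K_0(R) is independent of the resolution (stable
   Schanuel, by induction on the lengths) and additive on short exact sequences
   (horseshoe lemma).  Extended linearly, chi is an inverse of theta_R. *)

From HB Require Import structures.
From mathcomp Require Import all_boot all_order all_algebra.
From mathcomp Require Import ring zify.
From Stdlib Require Import ClassicalDescription.
From Stdlib Require ClassicalEpsilon.
Set Implicit Arguments. Unset Strict Implicit. Unset Printing Implicit Defensive.
Import GRing.Theory.
Local Open Scope ring_scope.

Section ModuleTheory.
Variable R : comPzRingType.
Implicit Types M N P Q K A B C X Z : lmodType R.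

Definition mk_linear M N (f : M -> N) (fL : linear f) : {linear M -> N} :=
  HB.pack f (GRing.isLinear.Build _ _ _ _ f fL).

Lemma pair_scaleD M N (a : R) (u v : M * N) :
  a *: u + v = (a *: u.1 + v.1, a *: u.2 + v.2).
Proof. by []. Qed.

Definition fst_linear M N := mk_linear (fun a (u v : M * N) => erefl (a *: u.1 + v.1)).
Definition snd_linear M N := mk_linear (fun a (u v : M * N) => erefl (a *: u.2 + v.2)).

Lemma pair_linear_proof M N P (f : {linear M -> N}) (g : {linear M -> P}) :
  linear (fun x => (f x, g x)).
Proof. by move=> a x y; rewrite !linearP. Qed.
Definition pair_linear M N P f g := mk_linear (@pair_linear_proof M N P f g).

Definition inl_linear M N := pair_linear idfun (\0 : {linear M -> N}).
Definition inr_linear M N := pair_linear (\0 : {linear N -> M}) idfun.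
Definition copair_linear M N P (f : {linear M -> P}) (g : {linear N -> P}) :
  {linear (M * N)%type -> P} :=
  (f \o fst_linear M N) \+ (g \o snd_linear M N).

Section Kernel.
Variables (A B : lmodType R) (f : {linear A -> B}).

Definition ker_pred : {pred A} := [pred x | f x == 0].
Fact ker_pred_submod_closed : submod_closed ker_pred.
Proof.
split=> [|a u v]; rewrite !inE ?linear0 // => /eqP fu /eqP fv.
by rewrite linearP fu fv scaler0 addr0.
Qed.
HB.instance Definition _ :=
  GRing.isSubmodClosed.Build R A ker_pred ker_pred_submod_closed.

Inductive kermod : predArgType := KerMod u & u \in ker_pred.
Definition ker_val (w : kermod) : A := let: KerMod u _ := w in u.
HB.instance Definition _ := [isSub of kermod for ker_val].
HB.instance Definition _ := [Choice of kermod by <:].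
HB.instance Definition _ := [SubChoice_isSubZmodule of kermod by <:].
HB.instance Definition _ := [SubZmodule_isSubLmodule of kermod by <:].

Definition ker_incl : {linear kermod -> A} :=
  mk_linear (fun a u v => erefl (ker_val (a *: u + v))).

Lemma ker_incl_inj : injective ker_incl. Proof. exact: val_inj. Qed.
Lemma ker_incl0 x : f (ker_incl x) = 0. Proof. by case: x => u /= /eqP. Qed.
Lemma ker_inclP y : f y = 0 -> exists x, ker_incl x = y.
Proof. by move=> /eqP fy; exists (KerMod fy). Qed.
End Kernel.

Lemma zero_mod_triv : trivial_mod 'rV[R]_0.
Proof. exact: thinmx0. Qed.

Lemma mod_iso_of_cancel M N (f : {linear M -> N}) (g : N -> M) :
  cancel f g -> cancel g f -> mod_iso M N.
Proof. by move=> fK gK; exists f; exists g. Qed.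

Lemma inv_linear_proof M N (f : {linear M -> N}) (g : N -> M) :
  cancel f g -> cancel g f -> linear g.
Proof. by move=> fK gK a x y; apply: (can_inj fK); rewrite linearP !gK. Qed.

Lemma mod_isoP M N : mod_iso M N ->
  exists (f : {linear M -> N}) (g : {linear N -> M}), cancel f g /\ cancel g f.
Proof. by case=> f [g fK gK]; exists f, (mk_linear (inv_linear_proof fK gK)). Qed.

Lemma mod_iso_refl M : mod_iso M M.
Proof. exact: (@mod_iso_of_cancel _ _ idfun id). Qed.

Lemma mod_iso_sym M N : mod_iso M N -> mod_iso N M.
Proof. by move=> /mod_isoP [f [g [fK gK]]]; exact: (mod_iso_of_cancel gK fK). Qed.

Lemma mod_iso_trans M N P : mod_iso M N -> mod_iso N P -> mod_iso M P.
Proof.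
move=> /mod_isoP [f [f' [fK f'K]]] /mod_isoP [g [g' [gK g'K]]].
by apply: (@mod_iso_of_cancel _ _ (g \o f) (f' \o g')) => x /=; rewrite ?gK ?fK ?f'K ?g'K.
Qed.

Lemma mod_iso_prod M M' A A' :
  mod_iso M M' -> mod_iso A A' -> mod_iso (M * A)%type (M' * A')%type.
Proof.
move=> /mod_isoP [f [f' [fK f'K]]] /mod_isoP [g [g' [gK g'K]]].
pose h := pair_linear (f \o fst_linear M A) (g \o snd_linear M A).
by apply: (@mod_iso_of_cancel _ _ h (fun x => (f' x.1, g' x.2))) => -[x y] /=;
  rewrite ?fK ?gK ?f'K ?g'K.
Qed.

Lemma mod_iso_triv_prod M Z : trivial_mod Z -> mod_iso (Z * M)%type M.
Proof.
move=> tZ; apply: (@mod_iso_of_cancel _ _ (snd_linear Z M) (pair 0)) => // -[z x] /=.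
by rewrite (tZ z).
Qed.

Lemma projective_iso P P' : projective P -> mod_iso P P' -> projective P'.
Proof.
move=> pP /mod_isoP [phi [gam [_ gamK]]] M N g f sg.
have [h hP] := pP M N g (f \o phi) sg.
by exists (h \o gam) => p /=; rewrite hP /= gamK.
Qed.

Lemma projective_triv Z : trivial_mod Z -> projective Z.
Proof. by move=> tZ M N g f _; exists \0 => p /=; rewrite linear0 (tZ p) linear0. Qed.

Lemma projective_prod P Q : projective P -> projective Q -> projective (P * Q)%type.
Proof.
move=> pP pQ M N g f sg.
have [h1 h1P] := pP M N g (f \o inl_linear P Q) sg.
have [h2 h2P] := pQ M N g (f \o inr_linear P Q) sg.
exists (copair_linear h1 h2) => -[x y] /=.
rewrite linearD h1P h2P /= -linearD /=; congr (f _).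
by rewrite -[(x, 0)]scale1r pair_scaleD /= !scale1r addr0 add0r.
Qed.

Lemma projective_summand P Q : projective (P * Q)%type -> projective P.
Proof.
move=> pPQ M N g f sg.
have [h hP] := pPQ M N g (f \o fst_linear P Q) sg.
by exists (h \o inl_linear P Q) => p /=; rewrite hP.
Qed.

Lemma fin_gen_surj M N (g : {linear M -> N}) : fin_gen M -> surj g -> fin_gen N.
Proof.
case=> n [v vP] sg; exists n, (fun i => g (v i)) => m.
have [x <-] := sg m; have [c ->] := vP x.
by exists c; rewrite linear_sum; apply: eq_bigr => i _; rewrite linearZ.
Qed.

Lemma fin_gen_triv Z : trivial_mod Z -> fin_gen Z.
Proof.
move=> tZ; exists 0%N, (fun _ => 0) => m; exists (fun _ => 0).
by rewrite big_ord0 (tZ m).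
Qed.

Lemma fst_sum M N n (F : 'I_n -> (M * N)%type) : (\sum_i F i).1 = \sum_i (F i).1.
Proof. by elim/big_rec2: _ => // i a b _ <-. Qed.
Lemma snd_sum M N n (F : 'I_n -> (M * N)%type) : (\sum_i F i).2 = \sum_i (F i).2.
Proof. by elim/big_rec2: _ => // i a b _ <-. Qed.

Lemma fin_gen_prod M N : fin_gen M -> fin_gen N -> fin_gen (M * N)%type.
Proof.
case=> n [v vP] [m [w wP]].
exists (n + m)%N, (fun i => match split i with inl j => (v j, 0) | inr k => (0, w k) end).
case=> x y; have [c1 ->] := vP x; have [c2 ->] := wP y.
exists (fun i => match split i with inl j => c1 j | inr k => c2 k end).
rewrite big_split_ord; apply: injective_projections; rewrite /= ?fst_sum ?snd_sum /=.
  rewrite -[LHS]addr0; congr (_ + _).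
    by apply: eq_bigr => i _; rewrite (unsplitK (inl i)).
  by rewrite big1 // => i _; rewrite (unsplitK (inr i)) /= scaler0.
rewrite -[LHS]add0r; congr (_ + _).
  by rewrite big1 // => i _; rewrite (unsplitK (inl i)) /= scaler0.
by apply: eq_bigr => i _; rewrite (unsplitK (inr i)).
Qed.

Lemma fg_projective_prod P Q :
  fg_projective P -> fg_projective Q -> fg_projective (P * Q)%type.
Proof. by move=> [? ?] [? ?]; split; [apply: fin_gen_prod | apply: projective_prod]. Qed.

Lemma fg_projective_triv Z : trivial_mod Z -> fg_projective Z.
Proof. by move=> tZ; split; [apply: fin_gen_triv | apply: projective_triv]. Qed.

Lemma factor_through_inj K Q X (i : {linear K -> Q}) (g : {linear X -> Q}) :
  injective i -> (forall x, exists k, i k = g x) ->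
  exists h : {linear X -> K}, forall x, i (h x) = g x.
Proof.
move=> i_inj gP; pose h x := ClassicalEpsilon.epsilon (inhabits (0 : K)) (fun k => i k = g x).
have hP x : i (h x) = g x by apply: (ClassicalEpsilon.epsilon_spec _ (fun k => i k = g x)).
have hL : linear h by move=> a x y; apply: i_inj; rewrite linearP !hP linearP.
by exists (mk_linear hL).
Qed.

Lemma schanuel K Q K' Q' N :
  short_exact K Q N -> short_exact K' Q' N -> projective Q -> projective Q' ->
  mod_iso (K * Q')%type (K' * Q)%type.
Proof.
move=> [i [p [i_inj p_surj ip]]] [i' [p' [i'_inj p'_surj ip']]] pQ pQ'.
have [al alP] := pQ _ _ p' p p'_surj.
have [be beP] := pQ' _ _ p p' p_surj.
have pi0 k : p (i k) = 0 by apply/ip; exists k.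
have pi0' k : p' (i' k) = 0 by apply/ip'; exists k.
pose u : {linear (K * Q')%type -> Q} := (be \o snd_linear K Q') \+ (i \o fst_linear K Q').
pose v : {linear (K' * Q)%type -> Q'} := (al \o snd_linear K' Q) \+ (i' \o fst_linear K' Q).
have [r rP] : exists r : {linear (K * Q')%type -> K'}, forall x, i' (r x) = x.2 - al (u x).
  apply: (factor_through_inj (g := snd_linear K Q' \- (al \o u))) => // x.
  apply/ip'; rewrite /u /=.
  by rewrite linearB alP linearD beP pi0 addr0 subrr.
have [s sP] : exists s : {linear (K' * Q)%type -> K}, forall y, i (s y) = y.2 - be (v y).
  apply: (factor_through_inj (g := snd_linear K' Q \- (be \o v))) => // y.
  apply/ip; rewrite /v /=.
  by rewrite linearB beP linearD alP pi0' addr0 subrr.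
apply: (@mod_iso_of_cancel _ _ (pair_linear r u) (fun y => (s y, v y))).
  case=> k q' /=; apply: injective_projections => /=.
    apply: i_inj; rewrite sP /v /= rP /u /=.
    by rewrite [al _ + _]addrC addrNK [be q' + _]addrC addrK.
  by rewrite /v /= rP /u /= addrC addrNK.
case=> k' q /=; apply: injective_projections => /=.
  apply: i'_inj; rewrite rP /u /= sP /v /=.
  by rewrite [be _ + _]addrC addrNK [al q + _]addrC addrK.
by rewrite /u /= sP /v /= addrC addrNK.
Qed.

Lemma short_exact_ker B C (g : {linear B -> C}) : surj g -> short_exact (kermod g) B C.
Proof.
move=> g_surj; exists (ker_incl g), g; split => //; first exact: ker_incl_inj.
by move=> y; split; [exact: ker_inclP | case=> x <-; exact: ker_incl0].
Qed.

Lemma short_exact_syzygy A B C (f : {linear A -> B}) (g : {linear B -> C}) :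
  exact_at f g -> short_exact (kermod f) A (kermod g).
Proof.
move=> fg.
have [h hP] : exists h : {linear A -> kermod g}, forall x, ker_incl g (h x) = f x.
  apply: factor_through_inj; first exact: ker_incl_inj.
  by move=> x; apply: ker_inclP; apply/fg; exists x.
exists (ker_incl f), h; split; first exact: ker_incl_inj.
- move=> y; have /fg [x fx] := ker_incl0 y; exists x.
  by apply: ker_incl_inj; rewrite hP.
- move=> y; split=> [hy|[x <-]].
    by apply: ker_inclP; rewrite -hP hy linear0.
  by apply: ker_incl_inj; rewrite hP ker_incl0 linear0.
Qed.

Lemma short_exact_prodr K P M A :
  short_exact K P M -> short_exact K (P * A)%type (M * A)%type.
Proof.
move=> [i [p [i_inj p_surj ip]]].
exists (inl_linear P A \o i), (pair_linear (p \o fst_linear P A) (snd_linear P A)).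
split.
- by move=> x y /= [] /i_inj.
- by case=> m a; have [x <-] := p_surj m; exists (x, a).
- case=> x a /=; split; first by case=> /ip [k <-] ->; exists k.
  by case=> k [<- <-]; congr pair; apply/ip; exists k.
Qed.

Lemma short_exact_iso K P M N : short_exact K P M -> mod_iso M N -> short_exact K P N.
Proof.
move=> [i [p [i_inj p_surj ip]]] /mod_isoP [f [g [fK gK]]].
exists i, (f \o p); split => //.
- by move=> n; have [x px] := p_surj (g n); exists x; rewrite /= px gK.
- move=> y; rewrite -ip /=; split => [fy|->]; last by rewrite linear0.
  by rewrite -(fK (p y)) fy linear0.
Qed.

Lemma short_exact_triv Z M : trivial_mod Z -> short_exact Z M M.
Proof.
move=> tZ; exists \0, idfun; split.
- by move=> x y _; rewrite (tZ x) (tZ y).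
- by move=> y; exists y.
- by move=> y /=; split => [->|[x <-]] //; exists 0.
Qed.

Lemma short_exact_split M A : short_exact M (M * A)%type A.
Proof.
exists (inl_linear M A), (snd_linear M A); split.
- by move=> x y [].
- by move=> a; exists (0, a).
- by case=> x a /=; split => [->|[k [_ <-]]] //; exists x.
Qed.

Lemma short_exact_triv_mid K1 K K2 :
  short_exact K1 K K2 -> trivial_mod K1 -> trivial_mod K2 -> trivial_mod K.
Proof.
move=> [j [q [_ _ jq]]] t1 t2 k.
have /jq [k1 <-] : q k = 0 by apply: t2.
by rewrite (t1 k1) linear0.
Qed.

Lemma stable_schanuel K P M K' P' M' A B :
  short_exact K P M -> short_exact K' P' M' ->
  projective P -> projective P' -> projective A -> projective B ->
  mod_iso (M * A)%type (M' * B)%type ->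
  mod_iso (K * (P' * B))%type (K' * (P * A))%type.
Proof.
move=> KPM K'P'M' pP pP' pA pB MA_M'B.
apply: (schanuel (N := (M' * B)%type)).
- exact: short_exact_iso (short_exact_prodr A KPM) MA_M'B.
- exact: short_exact_prodr.
- exact: projective_prod.
- exact: projective_prod.
Qed.

Section Horseshoe.
Variables (M1 M M2 K1 P1 K2 P2 : lmodType R).
Variables (f : {linear M1 -> M}) (g : {linear M -> M2}).
Hypotheses (f_inj : injective f) (fg : exact_at f g).
Variables (i1 : {linear K1 -> P1}) (p1 : {linear P1 -> M1}).
Hypotheses (i1_inj : injective i1) (p1_surj : surj p1) (i1p1 : exact_at i1 p1).
Variables (i2 : {linear K2 -> P2}) (p2 : {linear P2 -> M2}).
Hypotheses (i2_inj : injective i2) (p2_surj : surj p2) (i2p2 : exact_at i2 p2).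
Variable h : {linear P2 -> M}.
Hypothesis hP : forall y, g (h y) = p2 y.

Definition horseshoe_map : {linear (P1 * P2)%type -> M} := copair_linear (f \o p1) h.

Lemma horseshoe_map_surj : surj horseshoe_map.
Proof.
move=> m; have [y py] := p2_surj (g m).
have /fg [m1 fm1] : g (m - h y) = 0 by rewrite linearB hP py subrr.
have [x px] := p1_surj m1.
by exists (x, y); rewrite /horseshoe_map /copair_linear /= px fm1 subrK.
Qed.

Local Notation K := (kermod horseshoe_map).
Local Notation k_incl := (ker_incl horseshoe_map).

Lemma horseshoe_ker_p2 k : p2 (k_incl k).2 = 0.
Proof.
have := ker_incl0 k; case: (k_incl k) => x y /= E.
have fp1x : g (f (p1 x)) = 0 by apply/fg; exists (p1 x).
by rewrite -hP -(linear0 g) -E linearD fp1x add0r.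
Qed.

Lemma horseshoe_ker_inl : exists j : {linear K1 -> K},
  forall k, k_incl (j k) = (i1 k, 0).
Proof.
apply: (factor_through_inj (g := inl_linear P1 P2 \o i1)); first exact: ker_incl_inj.
move=> k; apply: ker_inclP; rewrite /horseshoe_map /copair_linear /=.
have -> : p1 (i1 k) = 0 by apply/i1p1; exists k.
by rewrite !linear0 addr0.
Qed.

Lemma horseshoe_ker_snd : exists q : {linear K -> K2},
  forall k, i2 (q k) = (k_incl k).2.
Proof.
apply: (factor_through_inj (g := snd_linear P1 P2 \o k_incl)) => // k.
by apply/i2p2; exact: horseshoe_ker_p2.
Qed.

Lemma horseshoe_ker_short_exact : short_exact K1 K K2.
Proof.
have [j jP] := horseshoe_ker_inl; have [q qP] := horseshoe_ker_snd.
exists j, q; split.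
- by move=> a b /(congr1 k_incl); rewrite !jP => -[] /i1_inj.
- move=> k2; have /fg [m1 fm1] : g (h (i2 k2)) = 0 by rewrite hP; apply/i2p2; exists k2.
  have [x px] := p1_surj m1.
  have /ker_inclP [k kE] : horseshoe_map (- x, i2 k2) = 0.
    by rewrite /horseshoe_map /copair_linear /= !linearN px fm1 addNr.
  by exists k; apply: i2_inj; rewrite qP kE.
- move=> k; split=> [qk0|[k1 <-]]; last first.
    by apply: i2_inj; rewrite qP jP linear0.
  have y0 : (k_incl k).2 = 0 by rewrite -qP qk0 linear0.
  have := ker_incl0 k.
  case E: (k_incl k) y0 => [x y] /= y0; rewrite y0 linear0 addr0 => fp1x.
  have /i1p1 [k1 Ek1] : p1 x = 0 by apply: f_inj; rewrite fp1x linear0.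
  by exists k1; apply: (@ker_incl_inj _ _ horseshoe_map); rewrite jP E Ek1 y0.
Qed.
End Horseshoe.

Lemma horseshoe M1 M M2 K1 P1 K2 P2 :
  short_exact M1 M M2 -> short_exact K1 P1 M1 -> short_exact K2 P2 M2 ->
  projective P2 ->
  exists K, short_exact K (P1 * P2)%type M /\ short_exact K1 K K2.
Proof.
move=> [f [g [f_inj g_surj fg]]] [i1 [p1 [i1_inj p1_surj i1p1]]]
  [i2 [p2 [i2_inj p2_surj i2p2]]] pP2.
have [h hP] := pP2 _ _ g p2 g_surj.
exists (kermod (horseshoe_map f p1 h)); split.
  exact/short_exact_ker/(horseshoe_map_surj fg p1_surj p2_surj hP).
exact: (horseshoe_ker_short_exact f_inj fg i1_inj p1_surj i1p1 i2_inj i2p2 hP).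
Qed.
End ModuleTheory.

Section GrothendieckGroup.
Variable R : comPzRingType.
Implicit Types (M N A B Z : lmodType R) (s t : fsum R).

Definition ind_eq N M : int := if excluded_middle_informative (N = M) then 1 else 0.

Lemma coef_nil M : coef [::] M = 0.
Proof. by rewrite /coef big_nil. Qed.

Lemma coef_cons (a : int) N s M : coef ((a, N) :: s) M = a * ind_eq N M + coef s M.
Proof.
rewrite /coef big_cons /ind_eq /=.
by case: (excluded_middle_informative (N = M)) => NM; rewrite ?mulr1 ?mulr0.
Qed.

Lemma coef_cat s t M : coef (s ++ t) M = coef s M + coef t M.
Proof. by rewrite /coef big_cat. Qed.

Lemma coef_scale n s M : coef (fscale n s) M = n * coef s M.
Proof.
elim: s => [|[a N] s IH]; first by rewrite /fscale /= !coef_nil mulr0.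
by rewrite /fscale /= coef_cons -/(fscale n s) IH coef_cons mulrDr mulrA.
Qed.

Lemma coef_flatten (l : seq (int * fsum R)) M :
  coef (flatten (map (fun q => fscale q.1 q.2) l)) M = \sum_(q <- l) q.1 * coef q.2 M.
Proof.
elim: l => [|q l IH]; first by rewrite /= coef_nil big_nil.
by rewrite /= coef_cat IH coef_scale big_cons.
Qed.

Lemma supported_fscale (Cl : lmodType R -> Prop) n s :
  supported Cl s -> supported Cl (fscale n s).
Proof. by elim: s => [|[a M] s IH] // /List.Forall_cons_iff [cM /IH]; constructor. Qed.

Section Relations.
Variable Cl : lmodType R -> Prop.
Local Notation rel := (groth_rel Cl).
Local Notation eqG := (groth_eq Cl).

Lemma groth_rel_nil : rel [::].
Proof. by exists [::]; split => // M. Qed.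

Lemma groth_rel_free s t : free_eq s t -> rel s -> rel t.
Proof. by move=> st [gs [gsP sE]]; exists gs; split => // M; rewrite -st sE. Qed.

Lemma groth_rel_cat s t : rel s -> rel t -> rel (s ++ t).
Proof.
move=> [g1 [g1P E1]] [g2 [g2P E2]]; exists (g1 ++ g2); split.
  by apply/List.Forall_app; split.
by move=> M; rewrite coef_cat E1 E2 !coef_flatten big_cat.
Qed.

Lemma groth_rel_scale n s : rel s -> rel (fscale n s).
Proof.
move=> [gs [gsP sE]]; exists (map (fun q => (n * q.1, q.2)) gs); split.
  by elim: gs gsP {sE} => [|q gs IH] //= /List.Forall_cons_iff [qP /IH]; constructor.
move=> M; rewrite coef_scale sE !coef_flatten big_map big_distrr.
by apply: eq_bigr => q _ /=; rewrite mulrA.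
Qed.

Lemma groth_rel_gen g : groth_gen Cl g -> rel g.
Proof.
move=> gP; exists [:: (1, g)]; split; first by constructor.
by move=> M; rewrite coef_flatten big_cons big_nil addr0 mul1r.
Qed.

Lemma groth_rel_comb s t u (m k : int) : rel s -> rel t ->
  (forall M, coef u M = m * coef s M + k * coef t M) -> rel u.
Proof.
move=> rs rt uE; apply: (@groth_rel_free (fscale m s ++ fscale k t)).
  by move=> M; rewrite coef_cat !coef_scale uE.
by apply: groth_rel_cat; apply: groth_rel_scale.
Qed.

Lemma groth_eq_free s t : free_eq s t -> eqG s t.
Proof.
move=> st; apply: (@groth_rel_free [::]); last exact: groth_rel_nil.
by move=> M; rewrite coef_nil coef_cat coef_scale st; ring.
Qed.

Lemma groth_eq_refl s : eqG s s. Proof. exact: groth_eq_free. Qed.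

Lemma groth_eq_comb2 a b c d x y (m k : int) : eqG a b -> eqG c d ->
  (forall M, coef x M - coef y M =
     m * (coef a M - coef b M) + k * (coef c M - coef d M)) ->
  eqG x y.
Proof.
move=> ab cd E; apply: (groth_rel_comb (m := m) (k := k) ab cd) => M.
by rewrite !coef_cat !coef_scale !mulN1r E.
Qed.

Lemma groth_eq_comb3 a b c d e f x y (m k l : int) : eqG a b -> eqG c d -> eqG e f ->
  (forall M, coef x M - coef y M =
     m * (coef a M - coef b M) + k * (coef c M - coef d M) + l * (coef e M - coef f M)) ->
  eqG x y.
Proof.
move=> ab cd ef E.
have abcd : rel (fscale m (a ++ fscale (-1) b) ++ fscale k (c ++ fscale (-1) d)).
  by apply: groth_rel_cat; apply: groth_rel_scale.
apply: (groth_rel_comb (m := 1) (k := l) abcd ef) => M.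
by rewrite !coef_cat !coef_scale !coef_cat !coef_scale !mulN1r E; ring.
Qed.

Lemma groth_eq_sym s t : eqG s t -> eqG t s.
Proof. by move=> st; apply: (groth_eq_comb2 (m := -1) (k := 0) st st) => M; ring. Qed.

Lemma groth_eq_iso M N : Cl M -> Cl N -> mod_iso M N -> eqG [:: (1, M)] [:: (1, N)].
Proof.
move=> cM cN MN; apply: (@groth_rel_free [:: (1, M); (-1, N)]).
  by move=> X; rewrite coef_cat coef_scale !coef_cons !coef_nil; ring.
by apply: groth_rel_gen; left; exists M, N.
Qed.

Lemma groth_eq_short_exact M1 M M2 : Cl M1 -> Cl M -> Cl M2 -> short_exact M1 M M2 ->
  eqG [:: (1, M)] [:: (1, M1); (1, M2)].
Proof.
move=> c1 c c2 S; apply: (@groth_rel_free [:: (1, M); (-1, M1); (-1, M2)]).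
  by move=> X; rewrite coef_cat coef_scale !coef_cons !coef_nil; ring.
by apply: groth_rel_gen; right; exists M1, M, M2.
Qed.

Lemma groth_eq_triv Z : Cl Z -> trivial_mod Z -> eqG [:: (1, Z)] [::].
Proof.
move=> cZ tZ; have ZZZ := groth_eq_short_exact cZ cZ cZ (short_exact_triv Z tZ).
apply: (groth_eq_comb2 (m := -1) (k := 0) ZZZ ZZZ) => M.
by rewrite !coef_cons !coef_nil; ring.
Qed.

Lemma groth_eq_prod A B : Cl A -> Cl B -> Cl (A * B)%type ->
  eqG [:: (1, (A * B)%type : lmodType R)] [:: (1, A); (1, B)].
Proof. by move=> cA cB cAB; apply: groth_eq_short_exact => //; apply: short_exact_split. Qed.
End Relations.

Lemma groth_rel_mono (C D : lmodType R -> Prop) s :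
  (forall M, C M -> D M) -> groth_rel C s -> groth_rel D s.
Proof.
move=> CD [gs [gsP sE]]; exists gs; split => //.
apply: List.Forall_impl gsP => q [[M [N [cM cN MN ->]]]|[M1 [M [M2 [c1 c c2 S ->]]]]].
  by left; exists M, N; split; auto.
by right; exists M1, M, M2; split; auto.
Qed.
End GrothendieckGroup.

Section EulerCharacteristic.
Variable R : comPzRingType.
Implicit Types (M N K P A B : lmodType R) (x y : fsum R).
Local Notation FGP := (@fg_projective R).
Local Notation eqK := (groth_eq FGP).

(* [euler_res n M x]: M has a resolution of length n by finitely generated
   projectives whose alternating sum sum_i (-1)^i (P_i) is x. *)
Inductive euler_res : nat -> lmodType R -> fsum R -> Prop :=
| euler_res0 M : FGP M -> euler_res 0 M [:: (1, M)]
| euler_resS n M K P y : FGP P -> short_exact K P M -> euler_res n K y ->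
    euler_res n.+1 M ((1, P) :: fscale (-1) y).

Lemma euler_res0_inv M x : euler_res 0 M x -> x = [:: (1, M)] /\ FGP M.
Proof. by move=> E; inversion E. Qed.

Lemma euler_res_supported n M x : euler_res n M x -> supported FGP x.
Proof.
elim=> [M' cM|n' M' K P y cP _ _ IH]; first by constructor.
by constructor => //; apply: supported_fscale.
Qed.

Lemma groth_eq_prod_fgp A B : FGP A -> FGP B ->
  eqK [:: (1, (A * B)%type : lmodType R)] [:: (1, A); (1, B)].
Proof. by move=> cA cB; apply: groth_eq_prod => //; apply: fg_projective_prod. Qed.

Lemma groth_eq_triv_fgp M : trivial_mod M -> eqK [:: (1, M)] [::].
Proof. by move=> tM; apply: groth_eq_triv (fg_projective_triv tM) tM. Qed.

(* A length-0 resolution is first lengthened by the trivial kernel, so that both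
   cases of an induction can peel off one step. *)
Lemma euler_res_step n M x : euler_res n M x ->
  exists K P y m, [/\ FGP P, short_exact K P M, euler_res m K y,
    eqK x ((1, P) :: fscale (-1) y) &
    (m < n)%N \/ [/\ n = 0%N, m = 0%N & trivial_mod K]].
Proof.
case=> [M' cM|n' M' K P y cP S E]; last first.
  by exists K, P, y, n'; split => //; [exact: groth_eq_refl | left].
have t0 := @zero_mod_triv R.
exists 'rV[R]_0, M', [:: (1, 'rV[R]_0 : lmodType R)], 0%N; split => //.
- exact: short_exact_triv.
- by constructor; apply: fg_projective_triv.
- have Z0 := groth_eq_triv_fgp t0.
  apply: (groth_eq_comb2 (m := 1) (k := 0) Z0 Z0) => X.
  by rewrite !coef_cons /= !coef_nil; ring.
- by right.
Qed.

Lemma step_lengths_lt (T1 T2 : Prop) k n1 n2 m1 m2 :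
  (n1 + n2 < k.+1)%N -> (n1 + n2 != 0)%N ->
  (m1 < n1)%N \/ [/\ n1 = 0%N, m1 = 0%N & T1] ->
  (m2 < n2)%N \/ [/\ n2 = 0%N, m2 = 0%N & T2] -> (m1 + m2 < k)%N.
Proof. by move=> lt nz [D1|[n1E m1E _]] [D2|[n2E m2E _]]; lia. Qed.

(* The invariant is stated up to stable isomorphism, which is what Schanuel's
   lemma transports from a module to its first syzygies. *)
Lemma euler_res_stable_iso k : forall n1 n2 M x M' x' A B, (n1 + n2 < k)%N ->
  euler_res n1 M x -> euler_res n2 M' x' -> FGP A -> FGP B ->
  mod_iso (M * A)%type (M' * B)%type ->
  eqK (x ++ [:: (1, A)]) (x' ++ [:: (1, B)]).
Proof.
elim: k => [//|k IH] n1 n2 M x M' x' A B lt E1 E2 cA cB MA_M'B.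
have [/eqP n0|n_neq0] := eqVneq (n1 + n2)%N 0%N.
  have [n1E n2E] : n1 = 0%N /\ n2 = 0%N by lia.
  move: E1 E2; rewrite n1E n2E => /euler_res0_inv [-> cM] /euler_res0_inv [-> cM'].
  have MA := groth_eq_prod_fgp cM cA; have M'B := groth_eq_prod_fgp cM' cB.
  have iso := groth_eq_iso (fg_projective_prod cM cA) (fg_projective_prod cM' cB) MA_M'B.
  apply: (groth_eq_comb3 (m := -1) (k := 1) (l := 1) MA M'B iso) => X.
  by rewrite !coef_cat !coef_cons !coef_nil; ring.
have [K1 [P1 [y1 [m1 [cP1 S1 F1 xE1 D1]]]]] := euler_res_step E1.
have [K2 [P2 [y2 [m2 [cP2 S2 F2 xE2 D2]]]]] := euler_res_step E2.
have K1_K2 := stable_schanuel S1 S2 cP1.2 cP2.2 cA.2 cB.2 MA_M'B.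
have yE := IH _ _ _ _ _ _ _ _ (step_lengths_lt lt n_neq0 D1 D2) F1 F2
  (fg_projective_prod cP2 cB) (fg_projective_prod cP1 cA) K1_K2.
have y12 : eqK (y1 ++ [:: (1, P2); (1, B)]) (y2 ++ [:: (1, P1); (1, A)]).
  apply: (groth_eq_comb3 (m := 1) (k := -1) (l := 1) yE
    (groth_eq_prod_fgp cP2 cB) (groth_eq_prod_fgp cP1 cA)) => X.
  by rewrite !coef_cat !coef_cons !coef_nil; ring.
apply: (groth_eq_comb3 (m := 1) (k := -1) (l := -1) xE1 y12 xE2) => X.
by rewrite !coef_cat !coef_cons !coef_scale !coef_nil; ring.
Qed.

Lemma euler_res_additive k : forall n1 n2 M1 M M2 x1 x2, (n1 + n2 < k)%N ->
  euler_res n1 M1 x1 -> euler_res n2 M2 x2 -> short_exact M1 M M2 ->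
  exists n x, euler_res n M x /\ eqK x (x1 ++ x2).
Proof.
elim: k => [//|k IH] n1 n2 M1 M M2 x1 x2 lt E1 E2 S.
have [K1 [P1 [y1 [m1 [cP1 S1 F1 xE1 D1]]]]] := euler_res_step E1.
have [K2 [P2 [y2 [m2 [cP2 S2 F2 xE2 D2]]]]] := euler_res_step E2.
have [K [SK SK']] := horseshoe S S1 S2 cP2.2.
have [mK [yK [FK yKE]]] : exists mK yK, euler_res mK K yK /\ eqK yK (y1 ++ y2).
  have [/eqP n0|n_neq0] := eqVneq (n1 + n2)%N 0%N; last first.
    exact: IH (step_lengths_lt lt n_neq0 D1 D2) F1 F2 SK'.
  case: D1 => [|[_ m10 t1]]; first by lia.
  case: D2 => [|[_ m20 t2]]; first by lia.
  move: F1 F2; rewrite m10 m20 => /euler_res0_inv [-> _] /euler_res0_inv [-> _].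
  have tK := short_exact_triv_mid SK' t1 t2.
  exists 0%N, [:: (1, K)]; split; first by constructor; apply: fg_projective_triv.
  apply: (groth_eq_comb3 (m := 1) (k := -1) (l := -1) (groth_eq_triv_fgp tK)
    (groth_eq_triv_fgp t1) (groth_eq_triv_fgp t2)) => X.
  by rewrite !coef_cat !coef_cons !coef_nil; ring.
have cPP := fg_projective_prod cP1 cP2.
exists mK.+1, ((1, (P1 * P2)%type : lmodType R) :: fscale (-1) yK); split.
  exact: euler_resS cPP SK FK.
have x12 : eqK (x1 ++ x2) ((1, P1) :: fscale (-1) y1 ++ (1, P2) :: fscale (-1) y2).
  apply: (groth_eq_comb2 (m := 1) (k := 1) xE1 xE2) => X.
  by rewrite !(coef_cat, coef_cons, coef_scale); ring.
apply: (groth_eq_comb3 (m := -1) (k := 1) (l := 1) yKE (groth_eq_prod_fgp cP1 cP2)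
  (groth_eq_sym x12)) => X.
by rewrite !(coef_cat, coef_cons, coef_scale, coef_nil); ring.
Qed.
End EulerCharacteristic.

Section SuperFinitelyPresented.
Variable R : comPzRingType.
Implicit Types (M N K P : lmodType R).

Lemma fg_projective_sfp M : fg_projective M -> super_fin_pres M.
Proof.
move=> cM; have t0 := @zero_mod_triv R.
pose P i : lmodType R := if i is 0%N then M else 'rV[R]_0.
exists P, (fun i => \0), idfun; split.
- by case=> [|i] //=; apply: fg_projective_triv.
- by move=> y; exists y.
- by move=> y; split => [y0|[x <-]] //; exists 0; exact: esym y0.
- by move=> i y; split => [_|[x <-]] //; exists 0; rewrite (t0 y).
Qed.

Lemma sfp_extension K P M : super_fin_pres K -> short_exact K P M -> fg_projective P ->
  super_fin_pres M.
Proof.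
move=> [PK [dK [eK [cPK eK_surj dKeK dK_exact]]]] [i [p [i_inj p_surj ip]]] cP.
pose P' j : lmodType R := if j is j'.+1 then PK j' else P.
pose d' j : {linear P' j.+1 -> P' j} :=
  if j is j'.+1 then dK j' else i \o eK.
exists P', d', p; split => //.
- by case.
- move=> y; rewrite ip; split; last by case=> x <-; exists (eK x).
  by case=> k <-; have [x <-] := eK_surj k; exists x.
- case=> [|j] y /=; last exact: dK_exact.
  split=> [iy0|[x <-]]; first by apply/dKeK; apply: i_inj; rewrite linear0.
  have -> : eK (dK 0%N x) = 0 by apply/dKeK; exists x.
  by rewrite linear0.
Qed.

Section Syzygies.
Variables (M : lmodType R) (P : nat -> lmodType R).
Variables (d : forall i, {linear P i.+1 -> P i}) (e : {linear P 0%N -> M}).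
Hypotheses (e_surj : surj e) (de : exact_at (d 0) e).
Hypothesis d_exact : forall i, exact_at (d i.+1) (d i).

Definition syz_target k : lmodType R := if k is j.+1 then P j else M.
Definition syz_map k : {linear P k -> syz_target k} :=
  if k is j.+1 then d j else e.
Definition syzygy k : lmodType R := kermod (syz_map k).

Lemma syz_map_exact k : exact_at (syz_map k.+1) (syz_map k).
Proof. by case: k. Qed.

Lemma syzygy_short_exact k : short_exact (syzygy k.+1) (P k.+1) (syzygy k).
Proof. exact/short_exact_syzygy/syz_map_exact. Qed.

Lemma syzygy0_short_exact : short_exact (syzygy 0) (P 0) M.
Proof. exact: short_exact_ker. Qed.

Lemma syzygy_triv n : trivial_mod (P n.+1) -> trivial_mod (syzygy n).
Proof.
move=> tP y; apply: ker_incl_inj.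
have /syz_map_exact [x <-] := ker_incl0 y.
by rewrite (tP x) !linear0.
Qed.
End Syzygies.

Lemma syzygy_stably_iso M (P : nat -> lmodType R) (d : forall i, {linear P i.+1 -> P i})
    (e : {linear P 0%N -> M}) (Q : nat -> lmodType R)
    (d' : forall i, {linear Q i.+1 -> Q i}) (e' : {linear Q 0%N -> M}) :
  surj e -> exact_at (d 0%N) e -> (forall i, exact_at (d i.+1) (d i)) ->
  surj e' -> exact_at (d' 0%N) e' -> (forall i, exact_at (d' i.+1) (d' i)) ->
  (forall i, projective (P i)) -> (forall i, projective (Q i)) ->
  forall k, exists A B, [/\ projective A, projective B &
     mod_iso (syzygy d e k * A)%type (syzygy d' e' k * B)%type].
Proof.
move=> e_surj de d_ex e'_surj d'e' d'_ex pP pQ; elim=> [|k [A [B [pA pB iso]]]].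
  exists (Q 0%N), (P 0%N); split => //.
  by apply: schanuel => //; apply: syzygy0_short_exact.
exists (Q k.+1 * B)%type, (P k.+1 * A)%type; split; try exact: projective_prod.
exact: stable_schanuel (syzygy_short_exact de d_ex k) (syzygy_short_exact d'e' d'_ex k)
  (pP _) (pQ _) pA pB iso.
Qed.

Lemma sfp_finite_pd_fg_syzygy M (P : nat -> lmodType R)
    (d : forall i, {linear P i.+1 -> P i}) (e : {linear P 0%N -> M}) n :
  surj e -> exact_at (d 0%N) e -> (forall i, exact_at (d i.+1) (d i)) ->
  (forall i, fg_projective (P i)) -> pd_le n M -> fg_projective (syzygy d e n).
Proof.
move=> e_surj de d_ex cP [Q [d' [e' [cQ e'_surj d'e' d'_ex]]]].
have [A [B [pA pB iso]]] := syzygy_stably_iso e_surj de d_ex e'_surj d'e' d'_ex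
  (fun i => (cP i).2) (fun i => (cQ i).1) n.
have t' := syzygy_triv d'e' d'_ex (fun y => (cQ n.+1).2 (leqnn _) y).
have pKA : projective (syzygy d e n * A)%type.
  apply: (projective_iso pB); apply: mod_iso_sym.
  exact: mod_iso_trans iso (mod_iso_triv_prod B t').
split; last exact: projective_summand pKA.
have [_ [p [_ p_surj _]]] := syzygy_short_exact de d_ex n.
exact: fin_gen_surj (cP n.+1).1 p_surj.
Qed.

Lemma euler_res_of_fg_syzygy M (P : nat -> lmodType R)
    (d : forall i, {linear P i.+1 -> P i}) (e : {linear P 0%N -> M}) n :
  surj e -> exact_at (d 0%N) e -> (forall i, exact_at (d i.+1) (d i)) ->
  (forall i, fg_projective (P i)) -> fg_projective (syzygy d e n) ->
  exists m x, euler_res m M x.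
Proof.
move=> e_surj de d_ex cP cK.
have syzE k : (k <= n)%N -> exists j x, euler_res j (syzygy d e (n - k)) x.
  elim: k => [_|k IH lt_kn].
    by rewrite subn0; exists 0%N, [:: (1, syzygy d e n)]; constructor.
  have [j [x F]] := IH (ltnW lt_kn).
  have S := syzygy_short_exact de d_ex (n - k.+1); rewrite subnSK // in S.
  by exists j.+1; eexists; apply: euler_resS (cP _) S F.
have [j [x F]] := syzE n (leqnn n); rewrite subnn in F.
by exists j.+1; eexists; apply: euler_resS (cP _) (syzygy0_short_exact d e_surj) F.
Qed.

Lemma sfp_finite_pd_euler_res M :
  super_fin_pres M -> finite_pd M -> exists n x, euler_res n M x.
Proof.
move=> [P [d [e [cP e_surj de d_ex]]]] [n pdM].
exact/(euler_res_of_fg_syzygy e_surj de d_ex cP)/(sfp_finite_pd_fg_syzygy e_surj de d_ex cP pdM).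
Qed.

Lemma euler_res_sfp n M x :
  euler_res n M x -> super_fin_pres M /\ groth_eq (@super_fin_pres R) x [:: (1, M)].
Proof.
elim=> [M' cM|n' M' K P y cP S _ [sK yE]].
  by split; [apply: fg_projective_sfp | apply: groth_eq_refl].
have sM := sfp_extension sK S cP; split => //.
have KPM := groth_eq_short_exact sK (fg_projective_sfp cP) sM S.
apply: (groth_eq_comb2 (m := 1) (k := -1) KPM yE) => X.
by rewrite !(coef_cons, coef_scale, coef_nil); ring.
Qed.
End SuperFinitelyPresented.

Section EulerMap.
Variable R : comPzRingType.
Implicit Types (M N : lmodType R) (s t : fsum R).
Local Notation FGP := (@fg_projective R).
Local Notation SFP := (@super_fin_pres R).

Definition euler M : fsum R :=
  ClassicalEpsilon.epsilon (inhabits [::]) (fun x => exists n, euler_res n M x).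

Lemma eulerP M : (exists n x, euler_res n M x) -> exists n, euler_res n M (euler M).
Proof.
move=> [n [x E]].
exact: (ClassicalEpsilon.epsilon_spec _ (fun x => exists n, euler_res n M x)
  (ex_intro _ x (ex_intro _ n E))).
Qed.

Definition euler_sum s : fsum R := flatten (map (fun p => fscale p.1 (euler p.2)) s).

Lemma euler_sum_cat s t : euler_sum (s ++ t) = euler_sum s ++ euler_sum t.
Proof. by rewrite /euler_sum map_cat flatten_cat. Qed.

Lemma euler_sum_cons a M s : euler_sum ((a, M) :: s) = fscale a (euler M) ++ euler_sum s.
Proof. by []. Qed.

Lemma coef_euler_sum s N : coef (euler_sum s) N = \sum_(p <- s) p.1 * coef (euler p.2) N.
Proof.
elim: s => [|[a M] s IH]; first by rewrite coef_nil big_nil.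
by rewrite euler_sum_cons coef_cat coef_scale IH big_cons.
Qed.

Lemma coef_euler_sum_scale n s N : coef (euler_sum (fscale n s)) N = n * coef (euler_sum s) N.
Proof.
rewrite !coef_euler_sum /fscale big_map big_distrr.
by apply: eq_bigr => p _ /=; rewrite mulrA.
Qed.

Lemma sum_coef_split s M (F : lmodType R -> int) :
  \sum_(p <- s) p.1 * F p.2 =
  coef s M * F M + \sum_(p <- [seq q <- s | ind_eq q.2 M != 1]) p.1 * F p.2.
Proof.
elim: s => [|[a N] s IH]; first by rewrite coef_nil big_nil mul0r add0r.
rewrite big_cons IH coef_cons /= /ind_eq.
case: (excluded_middle_informative (N = M)) => [NM|NM] /=.
  by rewrite NM mulr1 mulrDl addrA.
by rewrite big_cons /= mulr0 add0r addrCA.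
Qed.

Lemma coef_filter_neq s M N : coef [seq q <- s | ind_eq q.2 M != 1] N =
  if excluded_middle_informative (M = N) then 0 else coef s N.
Proof.
elim: s => [|[a K] s IH]; first by rewrite coef_nil; case: excluded_middle_informative.
rewrite /= {1}/ind_eq; case: (excluded_middle_informative (K = M)) => [KM|KM] /=.
  rewrite IH coef_cons /ind_eq.
  case: (excluded_middle_informative (M = N)) => [//|MN] /=.
  case: (excluded_middle_informative (K = N)) => [KN|KN]; last by rewrite mulr0 add0r.
  by case: MN; rewrite -KM.
rewrite !coef_cons IH /ind_eq.
case: (excluded_middle_informative (M = N)) => [MN|//].
case: (excluded_middle_informative (K = N)) => [KN|KN]; last by rewrite mulr0 add0r.
by case: KM; rewrite KN.
Qed.

(* The linear extension of any [F] is well defined on the free abelian group: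
   induct on the total length, removing every occurrence of one module at a time. *)
Lemma free_eq_sum s t (F : lmodType R -> int) : free_eq s t ->
  \sum_(p <- s) p.1 * F p.2 = \sum_(p <- t) p.1 * F p.2.
Proof.
have [k] := ubnP (size s + size t); elim: k s t => [//|k IH] s t lt st.
case Est: (s ++ t) => [|[a M] r].
  by move: Est; case: s {lt st} => //; case: t.
rewrite (sum_coef_split s M) (sum_coef_split t M) st; congr (_ + _); apply: IH.
  pose keep := fun q : int * lmodType R => ind_eq q.2 M != 1.
  have : has (predC keep) (s ++ t).
    by rewrite Est /= /keep /ind_eq; case: excluded_middle_informative.
  move: lt; rewrite has_cat !has_count !size_filter -/keep.
  by have := count_predC keep s; have := count_predC keep t; lia.
by move=> X; rewrite !coef_filter_neq st.
Qed.

Lemma euler_sum_free s t : free_eq s t -> free_eq (euler_sum s) (euler_sum t).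
Proof.
by move=> st N; rewrite !coef_euler_sum; exact: (free_eq_sum (fun M => coef (euler M) N) st).
Qed.

Lemma euler_sum_groth_eq (Cl : lmodType R -> Prop) s :
  List.Forall (fun p => groth_eq Cl [:: (1, p.2)] (euler p.2)) s ->
  groth_eq Cl s (euler_sum s).
Proof.
elim: s => [|[a M] s IH]; first by move=> _; apply: groth_eq_refl.
case/List.Forall_cons_iff => /= ME /IH sE.
apply: (groth_eq_comb2 (m := a) (k := 1) ME sE) => X.
by rewrite euler_sum_cons !(coef_cat, coef_cons, coef_scale, coef_nil); ring.
Qed.

Lemma euler_sum_supported s :
  List.Forall (fun p => supported FGP (euler p.2)) s -> supported FGP (euler_sum s).
Proof.
elim: s => [|[a M] s IH]; first by constructor.
case/List.Forall_cons_iff => MP /IH sP.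
by rewrite euler_sum_cons; apply/List.Forall_app; split; first exact: supported_fscale.
Qed.

Section FinitePd.
Hypothesis sfp_finite_pd : forall M, SFP M -> finite_pd M.

Lemma euler_res_euler M : SFP M -> exists n, euler_res n M (euler M).
Proof. by move=> sM; apply/eulerP/sfp_finite_pd_euler_res => //; apply: sfp_finite_pd. Qed.

Lemma groth_eq_euler_res_iso M N n m x y :
  euler_res n M x -> euler_res m N y -> mod_iso M N -> groth_eq FGP x y.
Proof.
move=> EM EN MN; have t0 := @zero_mod_triv R; have Z0 := groth_eq_triv_fgp t0.
have xy := euler_res_stable_iso (ltnSn (n + m)) EM EN (fg_projective_triv t0)
  (fg_projective_triv t0) (mod_iso_prod MN (mod_iso_refl _)).
apply: (groth_eq_comb3 (m := 1) (k := -1) (l := 1) xy Z0 Z0) => X.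
by rewrite !(coef_cat, coef_cons, coef_nil); ring.
Qed.

Lemma euler_fg_projective M : FGP M -> groth_eq FGP [:: (1, M)] (euler M).
Proof.
move=> cM; have [n E] := euler_res_euler (fg_projective_sfp cM).
exact: groth_eq_euler_res_iso (euler_res0 cM) E (mod_iso_refl M).
Qed.

Lemma euler_sfp M : SFP M -> groth_eq SFP [:: (1, M)] (euler M).
Proof.
move=> sM; have [n E] := euler_res_euler sM.
by apply: groth_eq_sym; case: (euler_res_sfp E).
Qed.

Lemma euler_sum_groth_gen g : groth_gen SFP g -> groth_rel FGP (euler_sum g).
Proof.
case=> [[M [N [sM sN MN ->]]]|[M1 [M [M2 [s1 s s2 S ->]]]]].
  have [n EM] := euler_res_euler sM; have [m EN] := euler_res_euler sN.
  apply: (groth_rel_free _ (groth_eq_euler_res_iso EM EN MN)) => X.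
  by rewrite !euler_sum_cons !(coef_cat, coef_scale, coef_nil); ring.
have [n1 E1] := euler_res_euler s1; have [n E] := euler_res_euler s.
have [n2 E2] := euler_res_euler s2.
have [k [x [Ex xE]]] := euler_res_additive (ltnSn (n1 + n2)) E1 E2 S.
have M12 : groth_eq FGP (euler M) (euler M1 ++ euler M2).
  apply: (groth_eq_comb2 (m := -1) (k := 1)
    (groth_eq_euler_res_iso Ex E (mod_iso_refl M)) xE) => X; ring.
apply: (groth_rel_free _ M12) => X.
by rewrite !euler_sum_cons !(coef_cat, coef_scale, coef_nil); ring.
Qed.

Lemma euler_sum_groth_rel s : groth_rel SFP s -> groth_rel FGP (euler_sum s).
Proof.
move=> [gs [gsP sE]].
apply: (groth_rel_free (fun X => esym (euler_sum_free sE X))).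
elim: gs gsP {sE} => [|q gs IH]; first by move=> _; apply: groth_rel_nil.
case/List.Forall_cons_iff => qP /IH gsP.
rewrite /= euler_sum_cat; apply: groth_rel_cat => //.
apply: (@groth_rel_free _ _ (fscale q.1 (euler_sum q.2))).
  by move=> X; rewrite coef_scale coef_euler_sum_scale.
exact/groth_rel_scale/euler_sum_groth_gen/qP.
Qed.

Lemma theta_reflect s t : supported FGP s -> supported FGP t ->
  groth_eq SFP s t -> groth_eq FGP s t.
Proof.
move=> sS tS /euler_sum_groth_rel st.
have sumE u : supported FGP u -> groth_eq FGP u (euler_sum u).
  move=> uS; apply: euler_sum_groth_eq.
  by apply: List.Forall_impl uS => p; apply: euler_fg_projective.
have {}st : groth_eq FGP (euler_sum s) (euler_sum t).
  apply: (groth_rel_free _ st) => X.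
  by rewrite euler_sum_cat !coef_cat coef_euler_sum_scale coef_scale.
apply: (groth_eq_comb3 (m := 1) (k := 1) (l := -1) (sumE s sS) st (sumE t tS)) => X.
ring.
Qed.

Lemma theta_surjective s : supported SFP s -> exists t, supported FGP t /\ groth_eq SFP s t.
Proof.
move=> sS; exists (euler_sum s); split.
  apply: euler_sum_supported; apply: List.Forall_impl sS => p /euler_res_euler [n E].
  exact: euler_res_supported E.
by apply: euler_sum_groth_eq; apply: List.Forall_impl sS => p; apply: euler_sfp.
Qed.
End FinitePd.
End EulerMap.

Theorem proposition5p2 (R : comPzRingType) :
  (forall M : lmodType R, super_fin_pres M -> finite_pd M) ->
  theta_is_iso R.
Proof.
move=> sfp_finite_pd; split.
- by move=> s t _ _; apply: groth_rel_mono => M; apply: fg_projective_sfp.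
- exact: theta_reflect.
- exact: theta_surjective.
Qed.
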